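(* Let $(X_n)_{n\in\mathbb{N}}$ be a sequence of random matrices with $X_n\in M_n^{sa}$ having property $\mathcal{L}$. Then the sequence of probability measures $\mathbb{E} L_n^{\frac{1}{\sqrt{n}}X_n}$ is tight.
   Context: $M_n^{sa}$ denotes the space of $n\times n$ complex Hermitian matrices. For a random Hermitian $n\times n$ matrix $X$ with eigenvalues $\lambda_1\le\dots\le\lambda_n$, $L_n^X=\frac1n\sum_{i=1}^n\delta_{\lambda_i}$ and $\mathbb{E}L_n^X$ is the probability measure $A\mapsto\mathbb{E}(L_n^X(A))$. A sequence of random matrices $X_n\in M_n$ has property $\mathcal{L}$ if for every $\varepsilon>0$, \[ \lim_{M\to\infty}\limsup_{n\to\infty}\mathbb{P}\Big(\frac1{n^2}\sum_{i,j=1}^n|(X_n)_{ij}|^2\mathbf{1}_{\{|(X_n)_{ij}|>M\}}>\varepsilon\Big)=0. \] *)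

From HB Require Import structures.
From mathcomp Require Import all_boot all_order all_algebra.
From mathcomp Require Import all_classical all_reals all_analysis.
From mathcomp Require Import complex.
Import Order.TTheory GRing.Theory Num.Theory.
Import numFieldTopology.Exports numFieldNormedType.Exports.

Set Implicit Arguments.
Unset Strict Implicit.
Unset Printing Implicit Defensive.

Local Open Scope ring_scope.
Local Open Scope classical_set_scope.

Definition cabs (R : realType) (z : R[i]) : R := Normc.normc z.

Definition self_adjoint (R : realType) (n : nat) (A : 'M[R[i]]_n) : Prop :=
  forall i j : 'I_n, A j i = (A i j)^*%C.

(* The eigenvalues (with multiplicity) of a complex matrix, as a list of
   REAL numbers lambda_1, ..., lambda_n: a list s such that the characteristic
   polynomial of A equals prod_{x in s} ('X - x).  For a Hermitian matrix such
   a list exists and is unique up to permutation; the choice among the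
   permutations is irrelevant for the empirical measure below.
   (For non-Hermitian matrices the value is an arbitrary default, never used.) *)
Definition eigenseq (R : realType) (n : nat) (A : 'M[R[i]]_n) : seq R :=
  xget [::] [set s : seq R | char_poly A = \prod_(x <- s) ('X - ((x%:C)%C)%:P)].

Definition esd (R : realType) (n : nat) (A : 'M[R[i]]_n) (B : set R) : R :=
  (count (fun x => `[< B x >]) (eigenseq A))%:R / n%:R.

Definition normalized (R : realType) (n : nat) (A : 'M[R[i]]_n) : 'M[R[i]]_n :=
  (((Num.sqrt (n%:R : R))^-1)%:C)%C *: A.

Definition expected_esd d (T : measurableType d) (R : realType)
  (P : probability T R) (Y : forall n : nat, T -> 'M[R[i]]_n) (n : nat)
  (B : set R) : \bar R :=
  (\int[P]_w (esd (Y n w) B)%:E)%E.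

Definition tight (R : realType) (mu : nat -> set R -> \bar R) : Prop :=
  forall eps : R, 0 < eps ->
    exists K : set R, compact K /\
      forall n : nat, (0 < n)%N -> (mu n (~` K) < eps%:E)%E.

Definition tail_mass (R : realType) (n : nat) (A : 'M[R[i]]_n) (M : R) : R :=
  (n%:R ^+ 2)^-1 *
    \sum_(i < n) \sum_(j < n) (cabs (A i j) ^+ 2 * (M < cabs (A i j))%R%:R).

Definition property_L d (T : measurableType d) (R : realType)
  (P : probability T R) (X : forall n : nat, T -> 'M[R[i]]_n) : Prop :=
  forall eps : R, 0 < eps ->
    (fun M : R => limn_esup (fun n : nat =>
        P [set w | eps < tail_mass (X n w) M])) @ +oo --> (0 : \bar R).

Definition random_matrix_seq d (T : measurableType d) (R : realType)
  (X : forall n : nat, T -> 'M[R[i]]_n) : Prop :=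
  forall (n : nat) (i j : 'I_n),
    measurable_fun setT (fun w => @complex.Re R (X n w i j)) /\
    measurable_fun setT (fun w => @complex.Im R (X n w i j)).

(** The number of eigenvalues of [X_n / sqrt n] outside [[-C, C]] is at most
    [tr ((X_n / sqrt n)^2) / C^2 = |X_n|_F^2 / (n C^2)], and splitting the entries
    at level [M] gives [|X_n|_F^2 / n^2 <= M^2 + tail_mass X_n M].  Hence
    [L_n(R \ [-C, C]) <= 1{tail_mass X_n M > 1} + (M^2 + 1) / C^2] pointwise.
    Property L makes [P(tail_mass X_n M > 1)] small for large [n] and [M], and
    continuity from above handles the finitely many remaining [n]; so one [M]
    works for all [n], and [C] is then chosen large. *)

From HB Require Import structures.
From mathcomp Require Import all_boot all_order all_algebra.
From mathcomp Require Import all_classical all_reals all_analysis.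
From mathcomp Require Import complex.
From mathcomp Require Import ring lra measurable_realfun.
Import Order.TTheory GRing.Theory Num.Theory.
Import numFieldTopology.Exports numFieldNormedType.Exports.

Set Implicit Arguments.
Unset Strict Implicit.
Unset Printing Implicit Defensive.

Local Open Scope ring_scope.
Local Open Scope classical_set_scope.
Local Open Scope complex_scope.

Lemma prodr_seqN (R : comNzRingType) (I : Type) (s : seq I) (f : I -> R) :
  \prod_(x <- s) - f x = (-1) ^+ size s * \prod_(x <- s) f x.
Proof.
elim: s => [|a s IH]; first by rewrite !big_nil expr0 mulr1.
by rewrite !big_cons IH exprS mulN1r !mulNr mulrCA.
Qed.

Lemma comp_poly_Xn_inj (R : comNzRingType) k :
  (0 < k)%N -> injective (comp_poly ('X^k : {poly R})).
Proof.
move=> k_gt0 p q epq; apply/polyP => i.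
have := congr1 (fun r : {poly R} => r`_(i * k)) epq.
by rewrite /= !coef_comp_poly_Xn // dvdn_mull // mulnK.
Qed.

Section CharPoly.
Variables (R : comNzRingType) (n : nat).
Implicit Types (A : 'M[R]_n) (s : seq R).

Lemma char_poly_comp A q : char_poly A \Po q = \det (q%:M - map_mx polyC A).
Proof.
rewrite /char_poly -det_map_mx /char_poly_mx map_mxB map_scalar_mx /= comp_polyX.
by congr (\det (_ - _)); apply/matrixP => i j; rewrite !mxE comp_polyC.
Qed.

Lemma char_poly_comp_oppX A :
  char_poly A \Po - 'X = (-1) ^+ n * \det ('X%:M + map_mx polyC A).
Proof. by rewrite char_poly_comp -detZ scaleN1r opprD raddfN. Qed.

(* [X^2 - A^2 = (X - A) (X + A)] over [{poly R}] gives the spectrum of [A^2]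
   from that of [A] without triangularising [A]. *)
Lemma char_poly_sqr_comp A :
  char_poly (A *m A) \Po 'X^2 = char_poly A * \det ('X%:M + map_mx polyC A).
Proof.
rewrite char_poly_comp -[char_poly A]comp_polyXr char_poly_comp -det_mulmx map_mxM.
rewrite mulmxDr !mulmxBl (scalar_mxC _ (map_mx polyC A)) -scalar_mxM -expr2.
by rewrite addrA subrK.
Qed.

Lemma size_char_poly_prod A s :
  char_poly A = \prod_(x <- s) ('X - x%:P) -> size s = n.
Proof. by move=> hA; have := size_char_poly A; rewrite hA size_prod_XsubC => -[]. Qed.

Lemma mxtrace_char_poly_prod A s :
  char_poly A = \prod_(x <- s) ('X - x%:P) -> \tr A = \sum_(x <- s) x.
Proof.
move=> hA; have hs := size_char_poly_prod hA.
case: n A s hA hs => [|m] B s hB hs.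
  by case: s hB hs => // _ _; rewrite big_nil /mxtrace big_ord0.
by apply: oppr_inj; rewrite -char_poly_trace // hB -coefPn_prod_XsubC ?hs.
Qed.

Lemma char_poly_sqr_prod A s : char_poly A = \prod_(x <- s) ('X - x%:P) ->
  char_poly (A *m A) = \prod_(x <- s) ('X - (x ^+ 2)%:P).
Proof.
move=> hA; apply: (@comp_poly_Xn_inj _ 2) => //.
have hX : \det ('X%:M + map_mx polyC A) = \prod_(x <- s) ('X + x%:P).
  apply: (@lreg_sign _ n).
  rewrite -char_poly_comp_oppX hA rmorph_prod /= -(size_char_poly_prod hA) -prodr_seqN.
  by apply: eq_bigr => x _; rewrite comp_polyB comp_polyX comp_polyC opprD.
rewrite char_poly_sqr_comp hX hA -big_split rmorph_prod /=.
by apply: eq_bigr => x _; rewrite comp_polyB comp_polyX comp_polyC rmorphXn -subr_sqr.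
Qed.

Lemma mxtrace_sqr_char_poly_prod A s : char_poly A = \prod_(x <- s) ('X - x%:P) ->
  \tr (A *m A) = \sum_(x <- s) x ^+ 2.
Proof.
move/char_poly_sqr_prod; rewrite -(big_map (fun x => x ^+ 2) xpredT (fun y => 'X - y%:P)).
by move/mxtrace_char_poly_prod->; rewrite big_map.
Qed.

End CharPoly.

Lemma count_notin_itv_mul_sqr_le (R : realDomainType) (s : seq R) (C : R) : 0 <= C ->
  (count (fun x => `[< (~` `[-C, C]) x >]) s)%:R * C ^+ 2 <= \sum_(x <- s) x ^+ 2.
Proof.
move=> C0; elim: s => [|x s IH]; first by rewrite big_nil mul0r.
rewrite big_cons /= natrD mulrDl lerD //.
case: asboolP => [/= hx|_]; last by rewrite mul0r sqr_ge0.
rewrite mul1r -[x ^+ 2]real_normK ?num_real // lerXn2r ?nnegrE ?normr_ge0 //.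
by rewrite leNgt; apply: contra_notN hx => /ltW; rewrite in_itv /= -ler_norml.
Qed.

Section Spectrum.
Variable R : realType.

Definition frobenius2 n (A : 'M[R[i]]_n) : R := \sum_i \sum_j cabs (A i j) ^+ 2.

Lemma cabs_ge0 (z : R[i]) : 0 <= cabs z.
Proof. by case: z => a b; rewrite /cabs /= sqrtr_ge0. Qed.

Lemma normc_cabs (z : R[i]) : `|z| = (cabs z)%:C.
Proof. by rewrite normc_def; case: z. Qed.

Lemma mulcJ_cabs (z : R[i]) : z * z^* = (cabs z ^+ 2)%:C.
Proof. by rewrite -sqr_normc normc_cabs rmorphXn. Qed.

Lemma mxtrace_self_adjoint_sqr n (A : 'M[R[i]]_n) : self_adjoint A ->
  \tr (A *m A) = (frobenius2 A)%:C.
Proof.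
move=> hA; rewrite /mxtrace /frobenius2 rmorph_sum; apply: eq_bigr => i _.
by rewrite mxE rmorph_sum; apply: eq_bigr => j _; rewrite (hA i j) mulcJ_cabs.
Qed.

Lemma sum_sqr_eigen_normalized n (A : 'M[R[i]]_n) (s : seq R) : self_adjoint A ->
  char_poly (normalized A) = \prod_(x <- s) ('X - (x%:C)%:P) ->
  \sum_(x <- s) x ^+ 2 = frobenius2 A / n%:R.
Proof.
move=> hA; rewrite -(big_map (real_complex R) xpredT (fun y => 'X - y%:P)).
move/mxtrace_sqr_char_poly_prod; rewrite big_map.
rewrite /normalized -scalemxAl -scalemxAr !mxtraceZ mxtrace_self_adjoint_sqr //.
under eq_bigr do rewrite -rmorphXn.
rewrite -rmorph_sum -!rmorphM => /complexI <-.
by rewrite mulrA -invfM -expr2 sqr_sqrtr ?ler0n // mulrC.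
Qed.

(* No spectral theorem is needed: when [char_poly A] does not split over [R],
   [eigenseq A] is the default [[::]] and the bounds below hold trivially. *)
Lemma eigenseq_cases n (A : 'M[R[i]]_n) :
  char_poly A = \prod_(x <- eigenseq A) ('X - (x%:C)%:P) \/ eigenseq A = [::].
Proof. by rewrite /eigenseq; case: xgetP => [x -> Px|_]; [left|right]. Qed.

Lemma size_eigenseq_le n (A : 'M[R[i]]_n) : (size (eigenseq A) <= n)%N.
Proof.
case: (eigenseq_cases A) => [|->] //.
rewrite -(big_map (real_complex R) xpredT (fun y => 'X - y%:P)).
by move/size_char_poly_prod; rewrite size_map => ->.
Qed.

Lemma esd_ge0 n (A : 'M[R[i]]_n) B : 0 <= esd A B.
Proof. by rewrite /esd divr_ge0. Qed.

Lemma esd_le1 n (A : 'M[R[i]]_n) B : esd A B <= 1.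
Proof.
rewrite /esd; case: n A => [|n] A; first by rewrite invr0 mulr0.
by rewrite ler_pdivrMr ?ltr0Sn // mul1r ler_nat (leq_trans (count_size _ _)) ?size_eigenseq_le.
Qed.

Lemma frobenius2_ge0 n (A : 'M[R[i]]_n) : 0 <= frobenius2 A.
Proof. by apply: sumr_ge0 => i _; apply: sumr_ge0 => j _; apply: sqr_ge0. Qed.

Lemma esd_normalized_notin_itv_le n (A : 'M[R[i]]_n) (C : R) :
  (0 < n)%N -> self_adjoint A -> 0 < C ->
  esd (normalized A) (~` `[-C, C]) <= frobenius2 A / (n%:R ^+ 2 * C ^+ 2).
Proof.
move=> n_gt0 hA C_gt0.
have hcount : (count (fun x => `[< (~` `[-C, C]) x >]) (eigenseq (normalized A)))%:R
    * C ^+ 2 <= frobenius2 A / n%:R.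
  apply: le_trans (count_notin_itv_mul_sqr_le _ (ltW C_gt0)) _.
  case: (eigenseq_cases (normalized A)) => [/(sum_sqr_eigen_normalized hA)->//|->].
  by rewrite big_nil divr_ge0 ?frobenius2_ge0.
rewrite /esd; apply: le_trans (_ : _ <= frobenius2 A / n%:R / C ^+ 2 / n%:R) _.
  by rewrite ler_wpM2r ?invr_ge0 ?ler0n // ler_pdivlMr ?exprn_gt0.
rewrite le_eqVlt; apply/orP; left; apply/eqP; field.
by rewrite pnatr_eq0 -lt0n n_gt0 gt_eqF.
Qed.
End Spectrum.

Section TailMass.
Variables (R : realType) (n : nat) (A : 'M[R[i]]_n).

Lemma frobenius2_le_tail_mass (M : R) : (0 < n)%N -> 0 <= M ->
  frobenius2 A / n%:R ^+ 2 <= M ^+ 2 + tail_mass A M.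
Proof.
move=> n_gt0 M_ge0; have n2_gt0 : 0 < n%:R ^+ 2 :> R by rewrite exprn_gt0 ?ltr0n.
rewrite ler_pdivrMr // mulrDl /tail_mass (mulrAC (n%:R ^- 2)) mulVf ?gt_eqF // mul1r.
have -> : M ^+ 2 * n%:R ^+ 2 = \sum_(i < n) \sum_(j < n) M ^+ 2.
  by rewrite !sumr_const card_ord -mulrnA -[RHS]mulr_natr natrM -expr2.
rewrite /frobenius2 -big_split /=; apply: ler_sum => i _.
rewrite -big_split /=; apply: ler_sum => j _.
case: ltrP => [_|hM]; first by rewrite mulr1 lerDr sqr_ge0.
by rewrite mulr0 addr0 lerXn2r // nnegrE // cabs_ge0.
Qed.

Lemma nonincreasing_tail_mass : {homo tail_mass A : M M' /~ M <= M'}.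
Proof.
move=> M M' hM; rewrite ler_wpM2l ?invr_ge0 ?sqr_ge0 //.
apply: ler_sum => i _; apply: ler_sum => j _; rewrite ler_wpM2l ?sqr_ge0 //.
by case: (ltrP M (cabs (A i j))) => [/(le_lt_trans hM)->|].
Qed.

Lemma cabs_le_sum_cabs i j : cabs (A i j) <= \sum_i \sum_j cabs (A i j).
Proof.
have sum_ge0 i' : 0 <= \sum_j cabs (A i' j) by apply: sumr_ge0 => *; apply: cabs_ge0.
rewrite (bigD1 i) //= (bigD1 j) //= -addrA lerDl addr_ge0 //.
  by apply: sumr_ge0 => *; apply: cabs_ge0.
by apply: sumr_ge0 => *; apply: sum_ge0.
Qed.

Lemma tail_mass_eq0 (M : R) : \sum_i \sum_j cabs (A i j) <= M -> tail_mass A M = 0.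
Proof.
move=> hM; rewrite /tail_mass big1 ?mulr0 // => i _; rewrite big1 // => j _.
by rewrite ltNge (le_trans (cabs_le_sum_cabs i j) hM) mulr0.
Qed.

Lemma esd_normalized_notin_itv_le_tail (M C : R) :
  (0 < n)%N -> self_adjoint A -> 0 <= M -> 0 < C ->
  esd (normalized A) (~` `[-C, C]) <= (1 < tail_mass A M)%R%:R + (M ^+ 2 + 1) / C ^+ 2.
Proof.
move=> n_gt0 hA M_ge0 C_gt0.
have bound_ge0 : 0 <= (M ^+ 2 + 1) / C ^+ 2 by rewrite divr_ge0 ?addr_ge0 ?sqr_ge0.
case: ltrP => [_|tail_le1]; first by rewrite (le_trans (esd_le1 _ _)) // lerDl.
rewrite add0r (le_trans (esd_normalized_notin_itv_le n_gt0 hA C_gt0)) //.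
rewrite invfM mulrA ler_wpM2r ?invr_ge0 ?sqr_ge0 //.
by rewrite (le_trans (frobenius2_le_tail_mass n_gt0 M_ge0)) // lerD2l.
Qed.

End TailMass.

Lemma ex_uniform_threshold (R : realDomainType) (Q : nat -> R -> Prop) :
  (forall n, exists Mn, forall M, Mn <= M -> Q n M) ->
  (exists N M1, forall n M, (N <= n)%N -> M1 <= M -> Q n M) ->
  exists M0, forall n M, M0 <= M -> Q n M.
Proof.
move=> Qn [N [M1 QN]].
have [M2 Qlt] : exists M2, forall n M, (n < N)%N -> M2 <= M -> Q n M.
  elim: N {QN} => [|N [M2 IH]]; first by exists 0.
  have [MN QNM] := Qn N; exists (Num.max M2 MN) => n M.
  rewrite ltnS leq_eqVlt ge_max => /orP[/eqP-> /andP[_]|nN /andP[hM _]].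
    exact: QNM.
  exact: IH.
exists (Num.max M1 M2) => n M; rewrite ge_max => /andP[hM1 hM2].
by case: (leqP N n) => [/QN|/Qlt]; apply.
Qed.

Lemma ex_gt0_div_sqr_lt (R : realFieldType) (a e : R) : 0 <= a -> 0 < e ->
  exists2 C, 0 < C & a / C ^+ 2 < e.
Proof.
move=> a_ge0 e_gt0; have C_ge1 : 1 <= a / e + 1 by have := divr_ge0 a_ge0 (ltW e_gt0); lra.
have C_gt0 : 0 < a / e + 1 by apply: lt_le_trans C_ge1.
exists (a / e + 1) => //; apply: (@le_lt_trans _ _ (a / (a / e + 1))).
  by rewrite ler_wpM2l // lef_pV2 ?posrE ?exprn_gt0 // expr2 ler_peMl ?(ltW C_gt0).
by rewrite ltr_pdivrMr // mulrDr mulrCA mulfV ?gt_eqF // !mulr1 ltrDl.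
Qed.

Lemma limn_esup_lt (R : realType) (u : (\bar R)^nat) (a : \bar R) :
  (limn_esup u < a)%E -> exists N, forall n, (N <= n)%N -> (u n < a)%E.
Proof.
rewrite limn_esup_lim (cvg_lim _ (@cvg_esups_inf R u)) //.
move/ereal_inf_lt => [_ [N _ <-] hN]; exists N => n Nn.
by apply: le_lt_trans hN; apply: ereal_sup_ubound; exists n.
Qed.

Lemma cvg0_ereal_lt (R : realType) (T : Type) (F : set_system T) (FF : Filter F)
    (f : T -> \bar R) (a : R) :
  f x @[x --> F] --> (0 : \bar R) -> 0 < a -> \forall x \near F, (f x < a%:E)%E.
Proof. by move=> f0 a_gt0; exact: (f0 _ (@nbhs_open_ereal_lt R 0 (fun=> a) a_gt0)). Qed.

(* No measurability is required: the integral of a nonnegative function is the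
   supremum of the integrals of the simple functions below it.  The spectral
   measure [esd] is not known to depend measurably on the matrix. *)
Lemma ge0_le_integral_setT d (T : measurableType d) (R : realType)
    (mu : {measure set T -> \bar R}) (f1 f2 : T -> \bar R) :
  (forall x, (0 <= f1 x)%E) -> (forall x, (f1 x <= f2 x)%E) ->
  (\int[mu]_x f1 x <= \int[mu]_x f2 x)%E.
Proof.
move=> f1_ge0 f12; rewrite !ge0_integralTE //; last by move=> x; apply: le_trans (f12 x).
apply: ereal_sup_le => _ [h hf1 <-]; exists h => // x.
exact: le_trans (hf1 x) (f12 x).
Qed.

Lemma measurable_fun_cabs d (T : measurableType d) (R : realType) (f : T -> R[i]) :
  measurable_fun setT (fun w => complex.Re (f w)) ->
  measurable_fun setT (fun w => complex.Im (f w)) ->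
  measurable_fun setT (fun w => cabs (f w)).
Proof.
move=> mRe mIm; have -> : (fun w => cabs (f w)) =
    Num.sqrt \o (fun w => complex.Re (f w) ^+ 2 + complex.Im (f w) ^+ 2).
  by apply: boolp.funext => w /=; case: (f w).
apply: measurableT_comp; first exact: continuous_measurable_fun (@sqrt_continuous R).
by apply: measurable_funD; apply: measurable_funX.
Qed.

Lemma measurable_fun_natr_bool d (T : measurableType d) (R : realType) (b : T -> bool) :
  measurable_fun setT b -> measurable_fun setT (fun w => (b w)%:R : R).
Proof.
move=> mb; have -> : (fun w => (b w)%:R : R) = fun w => if b w then 1 else 0.
  by apply: boolp.funext => w; case: (b w).
exact: measurable_fun_ifT.
Qed.

Section RandomMatrices.
Variables (d : measure_display) (T : measurableType d) (R : realType).
Variables (P : probability T R) (X : forall n : nat, T -> 'M[R[i]]_n).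
Hypothesis measurable_X : random_matrix_seq X.

Lemma measurable_tail_mass n M : measurable_fun setT (fun w => tail_mass (X n w) M).
Proof.
have mcabs i j : measurable_fun setT (fun w => cabs (X n w i j)).
  by have [mRe mIm] := measurable_X i j; apply: measurable_fun_cabs.
apply: measurable_funM; first exact: measurable_cst.
apply: (measurable_sum _ (h := fun i w => \sum_(j < n) _)) => i.
apply: (measurable_sum _ (h := fun j w => _)) => j.
apply: measurable_funM; first exact/measurable_funX/mcabs.
by apply/measurable_fun_natr_bool/measurable_fun_ltr; [exact: measurable_cst|exact: mcabs].
Qed.

(* Property L is only used at level [eps = 1]. *)
Definition tail_event n M := [set w : T | 1 < tail_mass (X n w) M].

Lemma measurable_tail_event n M : measurable (tail_event n M).
Proof.
have := measurable_tail_mass n M measurableT (measurable_itv `]1%R, +oo[%R).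
by rewrite setTI; congr measurable; apply/seteqP; split => w /=; rewrite in_itv /= andbT.
Qed.

Lemma le_tail_event n M M' : M' <= M -> (P (tail_event n M) <= P (tail_event n M'))%E.
Proof.
move=> hM; apply: le_measure; rewrite ?inE; try exact: measurable_tail_event.
by move=> w /= /lt_le_trans; apply; apply: nonincreasing_tail_mass.
Qed.

Lemma tail_event_small n e : 0 < e ->
  exists Mn, forall M, Mn <= M -> (P (tail_event n M) < e%:E)%E.
Proof.
move=> e_gt0; pose F k := tail_event n k%:R.
have F_nonincreasing : {homo F : a b / (a <= b)%N >-> (b <= a)%O}.
  move=> a b ab; apply/subsetPset => w /= /lt_le_trans; apply.
  by apply: nonincreasing_tail_mass; rewrite ler_nat.
have F_cap : \bigcap_k F k = set0.
  apply/seteqP; split => // w Fw.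
  have := Fw (Num.Def.truncn (\sum_i \sum_j cabs (X n w i j))).+1 I.
  by rewrite /F /tail_event /= tail_mass_eq0 ?ltr10 // ltW // truncnS_gt.
have PF_fin : (P (F 0%N) < +oo)%E.
  by apply: le_lt_trans (probability_le1 P _) (ltry 1); exact: measurable_tail_event.
have := nonincreasing_cvg_mu PF_fin (fun k => measurable_tail_event n k%:R).
rewrite F_cap measure0 => /(_ measurable0 F_nonincreasing) /cvg0_ereal_lt.
move=> /(_ _ e_gt0) [N _ hN]; exists N%:R => M hM.
exact: le_lt_trans (le_tail_event n hM) (hN N (leqnn N)).
Qed.

Lemma tail_event_uniformly_small e : property_L P X -> 0 < e ->
  exists2 M, 0 <= M & forall n, (P (tail_event n M) < e%:E)%E.
Proof.
move=> hL e_gt0; have [M0 [_ hM0]] := cvg0_ereal_lt _ (hL 1 ltr01) e_gt0.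
have [N hN] := limn_esup_lt (hM0 (M0 + 1) (ltr_pwDr ltr01 (lexx M0))).
have [M hM] : exists M, forall n M', M <= M' -> (P (tail_event n M') < e%:E)%E.
  apply: ex_uniform_threshold => [n|]; first exact: tail_event_small.
  exists N, (M0 + 1) => n M' Nn hM'.
  exact: le_lt_trans (le_tail_event n hM') (hN n Nn).
by exists (Num.max M 0) => [|n]; [|apply: hM]; rewrite le_max lexx ?orbT.
Qed.

Hypothesis self_adjoint_X : forall n w, self_adjoint (X n w).

Lemma expected_esd_notin_itv_le n (M C : R) : (0 < n)%N -> 0 <= M -> 0 < C ->
  (expected_esd P (fun n w => normalized (X n w)) n (~` `[(- C)%R, C])
    <= P (tail_event n M) + ((M ^+ 2 + 1) / C ^+ 2)%:E)%E.
Proof.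
move=> n_gt0 M_ge0 C_gt0; set c := (M ^+ 2 + 1) / C ^+ 2.
have c_ge0 : 0 <= c by rewrite divr_ge0 ?addr_ge0 ?sqr_ge0.
have indic_tail w : \1_(tail_event n M) w = (1 < tail_mass (X n w) M)%R%:R :> R.
  rewrite indicE; case: ltrP => h; first by rewrite mem_set.
  by rewrite memNset //= => /(le_lt_trans h); rewrite ltxx.
rewrite /expected_esd.
pose g w := (\1_(tail_event n M) w + c)%:E.
apply: le_trans (ge0_le_integral_setT P (f2 := g) _ _) _.
- by move=> w; rewrite lee_fin esd_ge0.
- move=> w; rewrite lee_fin indic_tail.
  exact: esd_normalized_notin_itv_le_tail.
under eq_integral => w _ do rewrite /g EFinD.
rewrite ge0_integralD //; last exact/measurable_EFinP/measurable_indic/measurable_tail_event.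
rewrite integral_indic ?setIT //; last exact: measurable_tail_event.
rewrite integral_cst // [X in (_ + _ * X)%E](_ : _ = 1%E) ?mule1 //.
exact: probability_setT.
Qed.

End RandomMatrices.

Theorem proposition2p7 (d : measure_display) (T : measurableType d)
  (R : realType) (P : probability T R)
  (X : forall n : nat, T -> 'M[R[i]]_n) :
  random_matrix_seq X ->
  (forall (n : nat) (w : T), self_adjoint (X n w)) ->
  property_L P X ->
  tight (expected_esd P (fun n w => normalized (X n w))).
Proof.
move=> measurable_X self_adjoint_X hL eps eps_gt0.
have eps2_gt0 : 0 < eps / 2 by rewrite divr_gt0.
have [M M_ge0 hM] := tail_event_uniformly_small measurable_X hL eps2_gt0.
have [C C_gt0 hC] := ex_gt0_div_sqr_lt (addr_ge0 (sqr_ge0 M) ler01) eps2_gt0.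
exists `[- C, C]%classic; split; first exact: segment_compact.
move=> n n_gt0.
have := expected_esd_notin_itv_le P measurable_X self_adjoint_X n_gt0 M_ge0 C_gt0.
move/le_lt_trans; apply.
by rewrite [eps]splitr EFinD lteD ?lte_fin.
Qed.
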